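(* Let $\beta$ be a well-posed Salem number of degree $6$ with minimal polynomial $$ P(x)=x^6-ax^{5}-bx^{4}-cx^{3}-bx^{2}-ax+1\qquad (a,b,c\in\mathbb Z). $$ Then $\beta$ is a Parry number, and moreover: (1) if $2\leq -b<c-a+2$, then $$ d_{\beta}(1)=(a-1)\,\big(a+b+1,\ c-a+b+1,\ c-a-1,\ 2a-c-1,\ 2a-c-1,\ c-a-1,\ c-a+b+1,\ a+b+1,\ a-2,\ a-2\big)^{\infty}; $$ (2) if $a-c+2<-b\leq 1$, then $$ d_{\beta}(1)=a\,\big(b+1,\ c-a-1,\ a-1,\ 2a+b-c+1,\ c-a-1,\ c-a-1,\ 2a+b-c+1,\ a-1,\ c-a-1,\ b+1,\ a-1,\ a-1\big)^{\infty}, $$ where each listed entry is a single digit and $(w)^\infty$ denotes infinite repetition of the block $w$.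
   Context: A Salem number is an algebraic integer $\beta>1$ all of whose Galois conjugates have modulus at most $1$, with at least one of modulus exactly $1$. For a polynomial $P(x)=x^6-ax^{5}-bx^{4}-cx^{3}-bx^{2}-ax+1$, its trace polynomial is $Q(y)=y^3-ay^2-(b+3)y-(c-2a)$, characterized by $P(x)/x^3=Q(x+x^{-1})$. A sextic Salem number $\beta$ with minimal polynomial $P$ of this form is well-posed if $Q$ has three real roots $\gamma,\alpha_1,\alpha_2$ with $-1<\alpha_1<0<\alpha_2<1<2<\gamma$. For a real $\beta>1$, the beta transformation is $T_\beta(x)=\beta x-\lfloor \beta x\rfloor$ on $[0,1)$; for $x\in[0,1)$ put $x_n=\lfloor \beta T_\beta^{n-1}(x)\rfloor$ and $d_\beta(x)=x_1x_2x_3\cdots$. The expansion of one is $d_\beta(1):=\lim_{\epsilon\downarrow 0} d_\beta(1-\epsilon)$ (limit in the product topology). $\beta$ is a Parry number if $d_\beta(1)$ is eventually periodic, i.e. of the form $x_1\cdots x_m(x_{m+1}\cdots x_{m+p})^\infty$. *)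

From mathcomp Require Import all_boot all_algebra.
From mathcomp Require Import ssrZ.
From Stdlib Require Import Reals ZArith List.
From Coquelicot Require Import Coquelicot.

Set Implicit Arguments.
Unset Strict Implicit.
Unset Printing Implicit Defensive.

Local Open Scope R_scope.

Definition P_R (a b c : Z) (x : R) : R :=
  (x ^ 6 - IZR a * x ^ 5 - IZR b * x ^ 4 - IZR c * x ^ 3
   - IZR b * x ^ 2 - IZR a * x + 1)%R.

Fixpoint Cpow (z : C) (n : nat) : C :=
  match n with O => RtoC 1 | S k => Cmult z (Cpow z k) end.

Definition P_C (a b c : Z) (z : C) : C :=
  Cplus (Cminus (Cminus (Cminus (Cminus (Cminus (Cpow z 6)
     (Cmult (RtoC (IZR a)) (Cpow z 5)))
     (Cmult (RtoC (IZR b)) (Cpow z 4)))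
     (Cmult (RtoC (IZR c)) (Cpow z 3)))
     (Cmult (RtoC (IZR b)) (Cpow z 2)))
     (Cmult (RtoC (IZR a)) z))
   (RtoC 1).

Local Open Scope ring_scope.
Definition P_rat (a b c : Z) : {poly rat} :=
  Poly (map (fun z : Z => (int_of_Z z)%:~R : rat)
            [:: 1%Z; (- a)%Z; (- b)%Z; (- c)%Z; (- b)%Z; (- a)%Z; 1%Z]).

Local Close Scope ring_scope.
Local Open Scope R_scope.
Definition Q_R (a b c : Z) (y : R) : R :=
  (y ^ 3 - IZR a * y ^ 2 - IZR (b + 3) * y - IZR (c - 2 * a))%R.

(* beta is a Salem number whose minimal polynomial is P_{a,b,c}:
   beta > 1 is a root of the monic integer polynomial P, which is irreducible
   over Q (so P is the minimal polynomial of beta and beta is an algebraic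
   integer of degree 6); every Galois conjugate of beta (= every complex root
   of P other than beta) has modulus <= 1, and some conjugate has modulus 1. *)
Definition sextic_salem (a b c : Z) (beta : R) : Prop :=
  (1 < beta)%R /\ P_R a b c beta = 0%R /\
  irreducible_poly (P_rat a b c) /\
  (forall z : C, P_C a b c z = RtoC 0 -> z <> RtoC beta -> (Cmod z <= 1)%R) /\
  (exists z : C, P_C a b c z = RtoC 0 /\ z <> RtoC beta /\ Cmod z = 1%R).

Definition well_posed (a b c : Z) : Prop :=
  exists gamma alpha1 alpha2 : R,
    Q_R a b c gamma = 0%R /\ Q_R a b c alpha1 = 0%R /\ Q_R a b c alpha2 = 0%R /\
    (-1 < alpha1 < 0)%R /\ (0 < alpha2 < 1)%R /\ (1 < 2 < gamma)%R.

(* floor x = Int_part x (the integer n with n <= x < n+1) *)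
Definition Tbeta (beta x : R) : R := (beta * x - IZR (Int_part (beta * x)))%R.

(* digit sequence d_beta(x), 0-indexed: dseq beta x n = x_{n+1}
   = floor(beta * T_beta^n(x)) *)
Definition dseq (beta x : R) (n : nat) : Z :=
  Int_part (beta * Nat.iter n (Tbeta beta) x).

(* d is the expansion of one: d = lim_{eps -> 0+} d_beta(1 - eps) in the
   product topology (digits discrete): every finite prefix of d_beta(1-eps)
   agrees with that of d for all sufficiently small eps > 0. *)
Definition expansion_of_one (beta : R) (d : nat -> Z) : Prop :=
  forall N : nat, exists delta : R, (0 < delta <= 1)%R /\
    forall eps : R, (0 < eps < delta)%R ->
      forall n : nat, (n < N)%nat -> dseq beta (1 - eps) n = d n.

Definition eventually_periodic (d : nat -> Z) : Prop :=
  exists m p : nat, (0 < p)%nat /\ forall n : nat, (m <= n)%nat -> d (n + p)%nat = d n.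

Definition parry_number (beta : R) : Prop :=
  (1 < beta)%R /\ exists d, expansion_of_one beta d /\ eventually_periodic d.

(* the sequence x0 (w)^infty, 0-indexed *)
Definition pre_periodic (x0 : Z) (w : list Z) (n : nat) : Z :=
  match n with
  | O => x0
  | S k => List.nth (Nat.modulo k (List.length w)) w 0%Z
  end.

(* For a digit sequence d put r_0 = 1 and r_(n+1) = beta r_n - d_n.  If
   0 < r_n <= 1 for every n >= 1, then T_beta^n (1 - eps) = r_n - beta^n eps for
   all small eps > 0, so d is the expansion of one.  For both candidate
   sequences r_(p+1) - r_1 is a polynomial multiple of P(beta) = 0, so the
   remainders are periodic and attain their extrema on a period.  At a minimum,
   r_n <= r_(n+1) and nonnegative digits give r_n >= 0, and a positive digit
   further on makes it strict; at a maximum, every shift of d being below d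
   lexicographically within its first two digits gives r_n <= 1.  The digit
   inequalities needed come from the signs of Q at -1, 0 and 1, which the
   positions of its roots determine. *)

From Stdlib Require Import Reals ZArith List Lra Lia.
Import ListNotations.
Open Scope R_scope.

Lemma finite_pos_lower_bound (f : nat -> R) (N : nat) :
  (forall k, (k < N)%nat -> 0 < f k) ->
  exists delta, 0 < delta <= 1 /\ forall k, (k < N)%nat -> delta <= f k.
Proof.
  induction N as [|N IH]; intros f_pos.
  - exists 1; split; [lra | intros k Hk; lia].
  - destruct IH as [delta [Hdelta Hle]]; [intros k Hk; apply f_pos; lia|].
    pose proof (f_pos N (Nat.lt_succ_diag_r N)) as HfN.
    exists (Rmin delta (f N)); split.
    + split; [apply Rmin_glb_lt; lra | pose proof (Rmin_l delta (f N)); lra].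
    + intros k Hk; destruct (Nat.eq_dec k N) as [->|Hne]; [apply Rmin_r|].
      pose proof (Rmin_l delta (f N)); pose proof (Hle k ltac:(lia)); lra.
Qed.

Lemma finite_argmax (f : nat -> R) (m : nat) :
  exists n, (1 <= n <= S m)%nat /\ forall k, (1 <= k <= S m)%nat -> f k <= f n.
Proof.
  induction m as [|m [n [Hn Hmax]]].
  - exists 1%nat; split; [lia|]; intros k Hk; replace k with 1%nat by lia; lra.
  - destruct (Rle_dec (f (S (S m))) (f n)) as [Hle|Hgt].
    + exists n; split; [lia|]; intros k Hk.
      destruct (Nat.eq_dec k (S (S m))) as [->|]; [exact Hle | apply Hmax; lia].
    + exists (S (S m)); split; [lia|]; intros k Hk.
      destruct (Nat.eq_dec k (S (S m))) as [->|]; [lra|].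
      pose proof (Hmax k ltac:(lia)); lra.
Qed.

Lemma periodic_attains_max (f : nat -> R) (p : nat) : (0 < p)%nat ->
  (forall k, (1 <= k)%nat -> f (k + p)%nat = f k) ->
  exists n, (1 <= n <= p)%nat /\ forall k, (1 <= k)%nat -> f k <= f n.
Proof.
  intros p_gt0 f_periodic.
  destruct (finite_argmax f (p - 1)) as [n [Hn Hmax]].
  exists n; split; [lia|].
  intros k; induction k as [k IH] using lt_wf_ind; intros Hk.
  destruct (Nat.le_gt_cases k p) as [Hkp|Hkp]; [apply Hmax; lia|].
  replace k with ((k - p) + p)%nat by lia.
  rewrite f_periodic by lia; apply IH; lia.
Qed.

Section Remainders.
Variables (beta : R) (d : nat -> Z).

Fixpoint remainder (n : nat) : R :=
  match n with O => 1 | S k => beta * remainder k - IZR (d k) end.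

Hypothesis beta_gt1 : 1 < beta.

Section Greedy.
Hypothesis remainder_in_unit : forall n, 0 < remainder (S n) <= 1.

Lemma Int_part_perturbed_remainder n eps :
  0 < eps -> eps * beta ^ S n < remainder (S n) ->
  Int_part (beta * (remainder n - beta ^ n * eps)) = d n.
Proof.
  intros eps_pos Heps; symmetry; apply Int_part_spec.
  pose proof (remainder_in_unit n) as Hr; simpl in Heps, Hr.
  assert (0 < beta * beta ^ n * eps).
  { apply Rmult_lt_0_compat; [apply Rmult_lt_0_compat; [lra | apply pow_lt; lra] | lra]. }
  split; nra.
Qed.

Lemma iter_Tbeta_one_minus n eps : 0 < eps ->
  (forall k, (k < n)%nat -> eps * beta ^ S k < remainder (S k)) ->
  Nat.iter n (Tbeta beta) (1 - eps) = remainder n - beta ^ n * eps.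
Proof.
  induction n as [|n IH]; intros eps_pos Heps; [simpl; ring|].
  rewrite Nat.iter_succ, IH by (auto; intros k Hk; apply Heps; lia).
  unfold Tbeta; rewrite Int_part_perturbed_remainder by auto.
  simpl; ring.
Qed.

Lemma expansion_of_one_remainder : expansion_of_one beta d.
Proof.
  intro N.
  destruct (finite_pos_lower_bound (fun k => remainder (S k) / beta ^ S k) N)
    as [delta [Hdelta Hle]].
  { intros k _; apply Rdiv_lt_0_compat; [apply remainder_in_unit | apply pow_lt; lra]. }
  exists delta; split; [exact Hdelta|].
  intros eps Heps n Hn.
  assert (Hsmall : forall k, (k < N)%nat -> eps * beta ^ S k < remainder (S k)).
  { intros k Hk; specialize (Hle k Hk); cbv beta in Hle.
    assert (0 < beta ^ S k) by (apply pow_lt; lra).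
    replace (remainder (S k)) with (remainder (S k) / beta ^ S k * beta ^ S k)
      by (field; lra).
    apply Rmult_lt_compat_r; lra. }
  unfold dseq; rewrite iter_Tbeta_one_minus by (lra || (intros k Hk; apply Hsmall; lia)).
  apply Int_part_perturbed_remainder; [lra | apply Hsmall; lia].
Qed.

End Greedy.

Section Periodic.
Variables (p j : nat).
Hypothesis p_gt0 : (0 < p)%nat.
Hypothesis digits_periodic : forall k, (1 <= k)%nat -> d (k + p)%nat = d k.
Hypothesis remainder_return : remainder (1 + p) = remainder 1.
Hypothesis digits_nonneg : forall k, (1 <= k)%nat -> (0 <= d k)%Z.
Hypothesis j_ge1 : (1 <= j)%nat.
Hypothesis digit_j_pos : (0 < d j)%Z.
Hypothesis digits_lex_below : forall n, (1 <= n <= p)%nat ->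
  (d n < d 0%nat \/ (d n <= d 0%nat /\ d (S n) < d 1%nat))%Z.

Lemma remainder_periodic k : (1 <= k)%nat -> remainder (k + p) = remainder k.
Proof.
  induction k as [|k IH]; intros Hk; [lia|].
  destruct k as [|k]; [exact remainder_return|].
  replace (S (S k) + p)%nat with (S (S k + p)) by lia.
  cbn [remainder]; rewrite IH, (digits_periodic (S k)) by lia; reflexivity.
Qed.

Lemma digits_periodic_mul m k : (1 <= k)%nat -> d (k + m * p)%nat = d k.
Proof.
  intros Hk; induction m as [|m IH]; [f_equal; lia|].
  replace (k + S m * p)%nat with ((k + m * p) + p)%nat by lia.
  rewrite digits_periodic by lia; exact IH.
Qed.

(* At a minimum n of the remainders, r_n <= r_(n+1) = beta r_n - d_n. *)
Lemma remainder_nonneg : forall k, (1 <= k)%nat -> 0 <= remainder k.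
Proof.
  destruct (periodic_attains_max (fun k => - remainder k) p p_gt0) as [n [Hn Hmin]].
  { intros m Hm; cbv beta; rewrite remainder_periodic by exact Hm; reflexivity. }
  cbv beta in Hmin.
  pose proof (Hmin (S n) ltac:(lia)) as Hstep; simpl in Hstep.
  pose proof (IZR_le _ _ (digits_nonneg n ltac:(lia))).
  assert (0 <= remainder n) by nra.
  intros k Hk; pose proof (Hmin k Hk); lra.
Qed.

Lemma remainder_pos_of_later_digit i k : (1 <= k)%nat ->
  (0 < d (k + i))%Z -> 0 < remainder k.
Proof.
  revert k; induction i as [|i IH]; intros k Hk Hdigit.
  - rewrite Nat.add_0_r in Hdigit.
    pose proof (remainder_nonneg (S k) ltac:(lia)) as Hnext; simpl in Hnext.
    pose proof (IZR_lt _ _ Hdigit); nra.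
  - rewrite <- plus_n_Sm in Hdigit.
    pose proof (IH (S k) ltac:(lia) Hdigit) as Hnext; simpl in Hnext.
    pose proof (IZR_le _ _ (digits_nonneg k Hk)); nra.
Qed.

Lemma remainder_pos k : (1 <= k)%nat -> 0 < remainder k.
Proof.
  intros Hk; apply (remainder_pos_of_later_digit (j + k * p - k)); [exact Hk|].
  replace (k + (j + k * p - k))%nat with (j + k * p)%nat by nia.
  rewrite digits_periodic_mul by exact j_ge1; exact digit_j_pos.
Qed.

(* At a maximum n with r_n > 1, comparing the orbit of r_n with that of r_0 = 1
   one or two steps ahead contradicts maximality. *)
Lemma remainder_le_1 k : (1 <= k)%nat -> remainder k <= 1.
Proof.
  destruct (periodic_attains_max remainder p p_gt0 remainder_periodic) as [n [Hn Hmax]].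
  enough (remainder n <= 1) by (intros Hk; pose proof (Hmax k Hk); lra).
  apply Rnot_lt_le; intros Hgt.
  pose proof (Hmax (S n) ltac:(lia)) as Hn1; pose proof (Hmax (S (S n)) ltac:(lia)) as Hn2.
  pose proof (remainder_pos 1%nat (le_n 1)) as H1.
  pose proof (remainder_pos 2%nat ltac:(lia)) as H2.
  simpl in Hn1, Hn2, H1, H2.
  set (X := remainder n) in *.
  assert (Hgrow : 0 < (beta - 1) * (X - 1)) by (apply Rmult_lt_0_compat; lra).
  destruct (digits_lex_below n Hn) as [Hlt | [Hle Hlt]].
  - apply Zlt_le_succ, IZR_le in Hlt; rewrite succ_IZR in Hlt.
    nra.
  - apply IZR_le in Hle; apply Zlt_le_succ, IZR_le in Hlt; rewrite succ_IZR in Hlt.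
    assert (0 <= beta * (IZR (d 0%nat) - IZR (d n))) by (apply Rmult_le_pos; lra).
    assert (0 < (beta - 1) * (beta * (X - 1))) by (apply Rmult_lt_0_compat; nra).
    nra.
Qed.

Lemma expansion_of_one_periodic : expansion_of_one beta d.
Proof.
  apply expansion_of_one_remainder; intros n; split.
  - apply remainder_pos; lia.
  - apply remainder_le_1; lia.
Qed.

End Periodic.
End Remainders.

Lemma pre_periodic_period x0 (w : list Z) k : (1 <= k)%nat ->
  pre_periodic x0 w (k + length w) = pre_periodic x0 w k.
Proof.
  intros Hk; destruct k as [|k]; [lia|]; simpl.
  replace (k + length w)%nat with (k + 1 * length w)%nat by lia.
  rewrite Nat.Div0.mod_add; reflexivity.
Qed.

Lemma pre_periodic_nonneg x0 (w : list Z) k : Forall (Z.le 0) w -> (1 <= k)%nat ->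
  (0 <= pre_periodic x0 w k)%Z.
Proof.
  intros Hw Hk; destruct k as [|k]; [lia|]; simpl.
  generalize (k mod length w)%nat.
  induction Hw as [|x w Hx Hw IH]; intros [|i]; simpl; auto; lia.
Qed.

Lemma pre_periodic_eventually_periodic x0 (w : list Z) : w <> [] ->
  eventually_periodic (pre_periodic x0 w).
Proof.
  intros Hw; exists 1%nat, (length w); split.
  - destruct w; [congruence | simpl; lia].
  - intros n Hn; apply pre_periodic_period; lia.
Qed.

Definition expansion1 (a b c : Z) : nat -> Z :=
  pre_periodic (a - 1)
    [a + b + 1; c - a + b + 1; c - a - 1; 2 * a - c - 1; 2 * a - c - 1;
     c - a - 1; c - a + b + 1; a + b + 1; a - 2; a - 2]%Z.

Definition expansion2 (a b c : Z) : nat -> Z :=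
  pre_periodic a
    [b + 1; c - a - 1; a - 1; 2 * a + b - c + 1; c - a - 1; c - a - 1;
     2 * a + b - c + 1; a - 1; c - a - 1; b + 1; a - 1; a - 1]%Z.

Lemma remainder_expansion1_return a b c beta :
  remainder beta (expansion1 a b c) 11 - remainder beta (expansion1 a b c) 1 =
  P_R a b c beta * (1 + beta - beta ^ 2 - beta ^ 3 + beta ^ 4 + beta ^ 5).
Proof.
  cbn -[Z.mul Z.sub Z.add IZR pow]; unfold P_R.
  repeat rewrite ?plus_IZR, ?minus_IZR, ?mult_IZR; ring.
Qed.

Lemma remainder_expansion2_return a b c beta :
  remainder beta (expansion2 a b c) 13 - remainder beta (expansion2 a b c) 1 =
  P_R a b c beta * (1 - beta ^ 2 + beta ^ 3 + beta ^ 4 - beta ^ 5 + beta ^ 7).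
Proof.
  cbn -[Z.mul Z.sub Z.add IZR pow]; unfold P_R.
  repeat rewrite ?plus_IZR, ?minus_IZR, ?mult_IZR; ring.
Qed.

Lemma monic_cubic_roots_diff (A B C u v : R) : u <> v ->
  u ^ 3 - A * u ^ 2 - B * u - C = 0 -> v ^ 3 - A * v ^ 2 - B * v - C = 0 ->
  u ^ 2 + u * v + v ^ 2 - A * (u + v) - B = 0.
Proof.
  intros Huv Hu Hv.
  assert (H : (u - v) * (u ^ 2 + u * v + v ^ 2 - A * (u + v) - B) = 0) by lra.
  apply Rmult_integral in H; destruct H as [H|H]; [lra | exact H].
Qed.

Lemma monic_cubic_factor (A B C x y g : R) : x <> y -> x <> g -> y <> g ->
  x ^ 3 - A * x ^ 2 - B * x - C = 0 -> y ^ 3 - A * y ^ 2 - B * y - C = 0 ->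
  g ^ 3 - A * g ^ 2 - B * g - C = 0 ->
  forall t, t ^ 3 - A * t ^ 2 - B * t - C = (t - x) * (t - y) * (t - g).
Proof.
  intros Hxy Hxg Hyg Hx Hy Hg t.
  pose proof (monic_cubic_roots_diff A B C x y Hxy Hx Hy) as Exy.
  pose proof (monic_cubic_roots_diff A B C x g Hxg Hx Hg) as Exg.
  assert (H : (y - g) * (x + y + g - A) = 0) by lra.
  apply Rmult_integral in H; destruct H as [H|H]; [lra|].
  assert (HA : A = x + y + g) by lra; subst A.
  assert (HB : B = - (x * y + x * g + y * g)) by lra; subst B.
  assert (HC : C = x * y * g) by lra; subst C.
  ring.
Qed.

Lemma well_posed_Q_signs a b c : well_posed a b c ->
  Q_R a b c (-1) < 0 /\ 0 < Q_R a b c 0 /\ Q_R a b c 1 < 0.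
Proof.
  intros (g & x & y & Hg & Hx & Hy & Hx_range & Hy_range & Hg_range).
  unfold Q_R in *.
  rewrite !(monic_cubic_factor (IZR a) (IZR (b + 3)) (IZR (c - 2 * a)) x y g)
    by (assumption || lra).
  split; [|split].
  - assert (0 < (-1 - x) * (-1 - y)) by nra; nra.
  - assert ((0 - x) * (0 - y) < 0) by nra; nra.
  - assert (0 < (1 - x) * (1 - y)) by nra; nra.
Qed.

Lemma well_posed_coeff_bounds a b c : well_posed a b c ->
  (a + b + 2 < c /\ c < 2 * a /\ a - b - 2 < c)%Z.
Proof.
  intros Hwp; destruct (well_posed_Q_signs a b c Hwp) as (Hm1 & H0 & H1).
  unfold Q_R in *; cbn [pow] in *.
  repeat rewrite ?plus_IZR, ?minus_IZR, ?mult_IZR in Hm1, H0, H1.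
  repeat split; apply lt_IZR; repeat rewrite ?plus_IZR, ?minus_IZR, ?mult_IZR; lra.
Qed.

Lemma expansion_of_one_expansion1 a b c beta : 1 < beta -> P_R a b c beta = 0 ->
  well_posed a b c -> (2 <= - b)%Z -> expansion_of_one beta (expansion1 a b c).
Proof.
  intros beta_gt1 HP Hwp Hb.
  destruct (well_posed_coeff_bounds a b c Hwp) as (Hm1 & H0 & H1).
  apply (expansion_of_one_periodic beta (expansion1 a b c) beta_gt1 10 1).
  - lia.
  - intros k Hk; exact (pre_periodic_period _ _ k Hk).
  - apply Rminus_diag_uniq; rewrite remainder_expansion1_return, HP; ring.
  - intros k; apply pre_periodic_nonneg; repeat constructor; lia.
  - lia.
  - cbn -[Z.mul Z.add Z.sub]; lia.
  - intros n Hn; do 11 (destruct n as [|n]; [cbn -[Z.mul Z.add Z.sub]; lia|]); lia.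
Qed.

Lemma expansion_of_one_expansion2 a b c beta : 1 < beta -> P_R a b c beta = 0 ->
  well_posed a b c -> (- b <= 1)%Z -> expansion_of_one beta (expansion2 a b c).
Proof.
  intros beta_gt1 HP Hwp Hb.
  destruct (well_posed_coeff_bounds a b c Hwp) as (Hm1 & H0 & H1).
  apply (expansion_of_one_periodic beta (expansion2 a b c) beta_gt1 12 3).
  - lia.
  - intros k Hk; exact (pre_periodic_period _ _ k Hk).
  - apply Rminus_diag_uniq; rewrite remainder_expansion2_return, HP; ring.
  - intros k; apply pre_periodic_nonneg; repeat constructor; lia.
  - lia.
  - cbn -[Z.mul Z.add Z.sub]; lia.
  - intros n Hn; do 13 (destruct n as [|n]; [cbn -[Z.mul Z.add Z.sub]; lia|]); lia.
Qed.

Theorem proposition1 (a b c : Z) (beta : R) :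
  sextic_salem a b c beta -> well_posed a b c ->
  parry_number beta /\
  ((2 <= - b /\ - b < c - a + 2)%Z ->
     expansion_of_one beta
       (pre_periodic (a - 1)
          [a + b + 1; c - a + b + 1; c - a - 1; 2 * a - c - 1; 2 * a - c - 1;
           c - a - 1; c - a + b + 1; a + b + 1; a - 2; a - 2]%Z)) /\
  ((a - c + 2 < - b /\ - b <= 1)%Z ->
     expansion_of_one beta
       (pre_periodic a
          [b + 1; c - a - 1; a - 1; 2 * a + b - c + 1; c - a - 1; c - a - 1;
           2 * a + b - c + 1; a - 1; c - a - 1; b + 1; a - 1; a - 1]%Z)).
Proof.
  intros [beta_gt1 [HP _]] Hwp.
  pose proof (expansion_of_one_expansion1 a b c beta beta_gt1 HP Hwp) as case1.
  pose proof (expansion_of_one_expansion2 a b c beta beta_gt1 HP Hwp) as case2.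
  split; [split; [exact beta_gt1|] | split].
  - destruct (Z_le_gt_dec (- b) 1) as [Hb|Hb].
    + exists (expansion2 a b c); split; [exact (case2 Hb) |].
      apply pre_periodic_eventually_periodic; discriminate.
    + exists (expansion1 a b c); split; [apply case1; lia |].
      apply pre_periodic_eventually_periodic; discriminate.
  - intros [Hb _]; exact (case1 Hb).
  - intros [_ Hb]; exact (case2 Hb).
Qed.
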